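(* For every $n\ge 1$ let $H_n$ and $P_n$ denote the numbers of tilings of the regions $H_n$ and $P_n$ (defined in the context). Then $H_1=1$, $H_2=3$, $P_1=1$, $P_2=2$, and for all $n\ge 2$ $$H_n=H_{n-1}+2P_{n-1},\qquad P_n=H_{n-1}+P_{n-1}.$$ Consequently, for all $n\ge 3$, $H_n=2H_{n-1}+H_{n-2}$ and $P_n=2P_{n-1}+P_{n-2}$. In particular $(P_n)_{n\ge1}=(1,2,5,12,29,70,\dots)$ is the sequence of Pell numbers and $(H_n)_{n\ge1}=(1,3,7,17,41,99,\dots)$, i.e. for all $n\ge1$ $$P_n=\frac{(1+\sqrt2)^n-(1-\sqrt2)^n}{2\sqrt2},\qquad H_n=\frac{(1+\sqrt2)^n+(1-\sqrt2)^n}{2}.$$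
   Context: Let $s=\sqrt3/2$. Consider the standard triangular lattice in the plane whose vertices are the points $(a+b/2,\,bs)$ with $a,b\in\mathbb Z$ and whose edges are the unit segments joining lattice points in the directions $0^\circ,60^\circ,120^\circ$; it divides the plane into unit equilateral triangles called cells. A small tile is a single cell; a large tile is an equilateral triangle of side $2$ whose vertices are lattice points (so it is a union of $4$ cells; it may point up or down). For a region $R$ that is a finite union of cells, a tiling of $R$ is a finite set of small and large tiles, each contained in $R$, with pairwise disjoint interiors and union equal to $R$. For $n\ge1$, the region $H_n$ is the union of the trapezoid with vertices $(0,0),(n,0),(n-\tfrac12,s),(\tfrac12,s)$ and the trapezoid with vertices $(\tfrac12,s),(n-\tfrac12,s),(n,2s),(0,2s)$ (for $n=1$ these degenerate to two unit triangles meeting at a single point); $H_n$ consists of $4n-2$ cells. The region $P_n$ is $H_n$ with the cell with vertices $(n-1,0),(n,0),(n-\tfrac12,s)$ removed ($4n-3$ cells). By abuse of notation, $H_n$ and $P_n$ also denote the number of tilings of these regions. *)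

From HB Require Import structures.
From mathcomp Require Import all_boot all_order all_algebra.
From mathcomp Require Import finmap.
From mathcomp Require Import boolp.
Set Implicit Arguments. Unset Strict Implicit. Unset Printing Implicit Defensive.
Import Order.TTheory GRing.Theory Num.Theory.
Open Scope fset_scope.

(* Lattice point (a,b) is the point (a + b/2, b*sqrt3/2).
   A cell is encoded by (a, b, up):
   - up = true  : the upward cell with vertices (a,b),(a+1,b),(a,b+1);
   - up = false : the downward cell with vertices (a+1,b),(a,b+1),(a+1,b+1). *)
Definition cell := (int * int * bool)%type.

(* Tiles: a small tile (one cell), or a large (side 2) triangle with lattice
   vertices, pointing up (vertices (a,b),(a+2,b),(a,b+2)) or down
   (vertices (a+2,b),(a,b+2),(a+2,b+2)). *)
Inductive tile :=
| Small of cell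
| LargeUp of int & int
| LargeDown of int & int.

Definition tile_cells (t : tile) : seq cell :=
  match t with
  | Small c => [:: c]
  | LargeUp a b => [:: (a, b, true); (a + 1, b, true); (a, b + 1, true); (a, b, false)]
  | LargeDown a b => [:: (a + 1, b, false); (a, b + 1, false);
                        (a + 1, b + 1, false); (a + 1, b + 1, true)]
  end%R.

Definition is_tile_in (R : {fset cell}) (X : {set R}) : Prop :=
  exists t : tile,
    (forall c, c \in tile_cells t -> c \in R) /\
    (forall x : R, (x \in X) = (val x \in tile_cells t)).

(* A tiling of R: a set of tiles contained in R, pairwise non-overlapping
   (disjoint cell sets = disjoint interiors) whose union is R. *)
Definition is_tiling (R : {fset cell}) (T : {set {set R}}) : Prop :=
  partition T [set: R] /\ (forall X, X \in T -> is_tile_in X).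

Definition ntilings (R : {fset cell}) : nat :=
  #|[set T : {set {set R}} | `[< is_tiling T >]]|.

Definition Hcells (n : nat) : seq cell :=
  [seq ((i%:Z)%R, 0%R, true) | i <- iota 0 n] ++
  [seq ((i%:Z)%R, 0%R, false) | i <- iota 0 n.-1] ++
  [seq ((i%:Z)%R, 1%R, true) | i <- iota 0 n.-1] ++
  [seq ((i%:Z - 1)%R, 1%R, false) | i <- iota 0 n].

Definition Hreg (n : nat) : {fset cell} := [fset c | c in Hcells n].

(* P_n: H_n minus the cell with vertices (n-1,0),(n,0),(n-1/2,s),
   i.e. the up cell (a,b) = (n-1,0). *)
Definition Preg (n : nat) : {fset cell} :=
  Hreg n `\ (((n.-1)%:Z)%R, 0%R, true).

Definition Hn (n : nat) : nat := ntilings (Hreg n).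
Definition Pn (n : nat) : nat := ntilings (Preg n).

(* Count tilings as exact covers of the cell set by tile shapes:
   removing a tile then leaves a smaller region of the same kind.  All regions
   that occur are staircases [rows2 p q], made of the first [p] cells of the
   bottom row and the first [q] cells of the top row of H_n.  The last cell of
   the longer row is covered either only by a small tile, or by a small tile or
   one well-determined large tile, and each choice leaves a staircase.  This
   gives H_{n+1} = P_{n+1} + P_n and P_{n+1} = H_n + P'_n, where P'_n counts the
   mirror image of P_n and equals P_n; the Pell recurrences and Binet-type
   formulas follow. *)

From HB Require Import structures.
From mathcomp Require Import all_boot all_order all_algebra.
Import Order.TTheory GRing.Theory Num.Theory.
From mathcomp Require Import finmap boolp zify ring.
Set Implicit Arguments. Unset Strict Implicit. Unset Printing Implicit Defensive.
Local Open Scope fset_scope.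
Local Open Scope ring_scope.

Definition tile_code (t : tile) : cell + (int * int) + (int * int) :=
  match t with
  | Small c => inl (inl c)
  | LargeUp a b => inl (inr (a, b))
  | LargeDown a b => inr (a, b)
  end.

Definition tile_decode (x : cell + (int * int) + (int * int)) : tile :=
  match x with
  | inl (inl c) => Small c
  | inl (inr (a, b)) => LargeUp a b
  | inr (a, b) => LargeDown a b
  end.

Lemma tile_codeK : cancel tile_code tile_decode.
Proof. by case. Qed.

HB.instance Definition _ := Equality.copy tile (can_type tile_codeK).

Definition tile_set (t : tile) : {fset cell} := [fset c in tile_cells t].

Lemma mem_tile_set t c : (c \in tile_set t) = (c \in tile_cells t).
Proof. by rewrite inE. Qed.

Definition tile_inb (R : {fset cell}) (t : tile) : bool := all (mem R) (tile_cells t).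

Lemma tile_inbP R t : reflect (tile_set t `<=` R) (tile_inb R t).
Proof.
apply: (iffP allP) => [sub|/fsubsetP sub c ct].
  by apply/fsubsetP => c; rewrite mem_tile_set => /sub.
by apply: sub; rewrite mem_tile_set.
Qed.

Definition large_through (c : cell) : seq tile :=
  let: (a, b, u) := c in
  if u then
    [:: LargeUp a b; LargeUp (a - 1) b; LargeUp a (b - 1); LargeDown (a - 1) (b - 1)]
  else
    [:: LargeUp a b; LargeDown (a - 1) b; LargeDown a (b - 1); LargeDown (a - 1) (b - 1)].

Definition tiles_through (c : cell) : seq tile := Small c :: large_through c.

Lemma tiles_throughP c t : (c \in tile_cells t) = (t \in tiles_through c).
Proof.
apply/idP/idP.
  case: t => [c'|a b|a b]; rewrite !inE.
  - by move/eqP->; rewrite eqxx.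
  - by case/or4P=> /eqP-> /=; rewrite !inE ?addrK eqxx ?orbT.
  - by case/or4P=> /eqP-> /=; rewrite !inE ?addrK eqxx ?orbT.
rewrite inE => /orP[/eqP-> | ]; first by rewrite inE.
by case: c => [[a b] []]; rewrite !inE => /or4P[]/eqP->; rewrite !inE ?subrK eqxx ?orbT.
Qed.

Lemma tile_cells_exists t : exists c, c \in tile_cells t.
Proof. by case: t => *; eexists; exact: mem_head. Qed.

Definition tiles_in (R : {fset cell}) : {fset {fset cell}} :=
  [fset X in flatten [seq [seq tile_set t | t <- tiles_through c] | c <- enum_fset R]
   | X `<=` R].

Lemma tiles_inP R X : reflect (exists2 t, tile_inb R t & X = tile_set t) (X \in tiles_in R).
Proof.
rewrite inE; apply: (iffP andP) => [[/flatten_mapP[c _ /mapP[t _ ->]] /tile_inbP] | ].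
  by exists t.
case=> t /[dup] /tile_inbP tR /allP tR' ->; split=> //.
have [c ct] := tile_cells_exists t.
apply/flatten_mapP; exists c; first exact: tR'.
by apply/mapP; exists t; rewrite // -tiles_throughP.
Qed.

Lemma tiles_in_sub R X : X \in tiles_in R -> X `<=` R.
Proof. by case/tiles_inP => t /tile_inbP ? ->. Qed.

Lemma tiles_in_neq0 R X : X \in tiles_in R -> X != fset0.
Proof.
case/tiles_inP => t _ ->; have [c ct] := tile_cells_exists t.
by apply/fset0Pn; exists c; rewrite mem_tile_set.
Qed.

Definition exact_cover (R : {fset cell}) (S : {fset {fset cell}}) : Prop :=
  (forall c, c \in R -> exists2 X, X \in S & c \in X) /\
  (forall c X Y, X \in S -> Y \in S -> c \in X -> c \in Y -> X = Y).

(* Tilings of [R] as families of subsets of [cell], rather than of the subtype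
   [R] as in [is_tiling], so that [R] can shrink. *)
Definition tilings (R : {fset cell}) : {fset {fset {fset cell}}} :=
  [fset S in fpowerset (tiles_in R) | `[< exact_cover R S >]].

Lemma tilingsP R S :
  reflect [/\ S `<=` tiles_in R, (forall c, c \in R -> exists2 X, X \in S & c \in X)
            & (forall c X Y, X \in S -> Y \in S -> c \in X -> c \in Y -> X = Y)]
          (S \in tilings R).
Proof.
rewrite !inE fpowersetE; apply: (iffP andP) => [[? /asboolP[]]|[? ? ?]] //.
by split=> //; apply/asboolP.
Qed.

Section CellSets.
Variable R : {fset cell}.

Definition cell_set (X : {set R}) : {fset cell} := [fset val x | x in X].

Lemma mem_cell_set X (x : R) : (val x \in cell_set X) = (x \in X).
Proof. by apply/imfsetP/idP => [[y yX /val_inj ->] //|xX]; exists x. Qed.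

Lemma cell_set_inj : injective cell_set.
Proof. by move=> X Y E; apply/setP => x; rewrite -!mem_cell_set E. Qed.

Definition of_cell_set (Y : {fset cell}) : {set R} := [set x : R | val x \in Y].

Lemma of_cell_setK Y : Y `<=` R -> cell_set (of_cell_set Y) = Y.
Proof.
move=> sub; apply/fsetP => c; apply/imfsetP/idP => [[x]|cY].
  by rewrite inE => ? ->.
by exists [` fsubsetP sub c cY]; rewrite ?inE.
Qed.

Definition cell_family (T : {set {set R}}) : {fset {fset cell}} :=
  [fset cell_set X | X in T].

Lemma mem_cell_family T X : (cell_set X \in cell_family T) = (X \in T).
Proof.
by apply/imfsetP/idP => [[Y YT /cell_set_inj ->] //|XT]; exists X.
Qed.

Lemma cell_family_inj : injective cell_family.
Proof. by move=> T1 T2 E; apply/setP => X; rewrite -!mem_cell_family E. Qed.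

Lemma cell_family_tiling T : is_tiling T -> cell_family T \in tilings R.
Proof.
move=> [/and3P[/eqP covT trivT _] tileT]; apply/tilingsP; split.
- apply/fsubsetP => _ /imfsetP[X XT ->]; have [t [tR tX]] := tileT X XT.
  apply/tiles_inP; exists t; first exact/allP.
  apply/fsetP => c; rewrite mem_tile_set; apply/imfsetP/idP => [[x xX ->]|ct].
    by rewrite -tX.
  by exists [` tR c ct]; rewrite ?tX.
- move=> c cR; have : [` cR] \in cover T by rewrite covT inE.
  case/bigcupP => X XT xX; exists (cell_set X); first by rewrite mem_cell_family.
  by rewrite -[c]/(val [` cR]) mem_cell_set.
- move=> c _ _ /imfsetP[X1 X1T ->] /imfsetP[X2 X2T ->].
  case/imfsetP => x1 x1X ->; case/imfsetP => x2 x2X /val_inj E.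
  have [-> //|ne] := eqVneq X1 X2.
  by move: (disjointFr (trivIsetP trivT X1 X2 X1T X2T ne) x1X); rewrite E x2X.
Qed.

Lemma tilings_cell_family S : S \in tilings R ->
  exists2 T : {set {set R}}, is_tiling T & cell_family T = S.
Proof.
case/tilingsP => /fsubsetP Stiles covS disS.
have SR Y : Y \in S -> Y `<=` R by move/Stiles/tiles_in_sub.
exists [set X : {set R} | cell_set X \in S]; last first.
  apply/fsetP => Y; apply/imfsetP/idP => [[X]|YS].
    by rewrite inE => ? ->.
  by exists (of_cell_set Y); rewrite ?inE of_cell_setK ?SR.
split.
  apply/and3P; split.
  - apply/eqP/setP => x; rewrite inE; apply/bigcupP.
    have [Y YS xY] := covS _ (valP x).
    by exists (of_cell_set Y); rewrite !inE ?of_cell_setK ?SR.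
  - apply/trivIsetP => X1 X2; rewrite !inE => X1S X2S ne.
    apply/pred0P => x /=; apply/negbTE/negP => /andP[x1 x2].
    by move: ne; rewrite -(inj_eq cell_set_inj) (disS (val x) _ _ X1S X2S)
      ?mem_cell_set ?eqxx.
  - rewrite inE; apply/negP => /Stiles/tiles_in_neq0/fset0Pn[c].
    by case/imfsetP => x; rewrite inE.
move=> X; rewrite inE => /Stiles/tiles_inP[t /allP tR tX].
exists t; split=> // x; by rewrite -mem_cell_set tX mem_tile_set.
Qed.

End CellSets.

Lemma ntilingsE R : ntilings R = #|` tilings R|.
Proof.
rewrite /ntilings; set A := [set T : {set {set R}} | `[< is_tiling T >]].
have <- : [fset cell_family T | T in A] = tilings R.
  apply/fsetP => S; apply/imfsetP/idP => [[T]|/tilings_cell_family[T tT <-]].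
    by rewrite inE => /asboolP tT ->; exact: cell_family_tiling.
  by exists T; rewrite // inE; apply/asboolP.
rewrite card_imfset; last exact: cell_family_inj.
by rewrite -card_finset card_imfset.
Qed.

Lemma tiles_inD R X Y :
  Y \in tiles_in R -> (forall c, c \in Y -> c \notin X) -> Y \in tiles_in (R `\` X).
Proof.
case/tiles_inP => t /tile_inbP tR -> dis; apply/tiles_inP; exists t => //.
by apply/tile_inbP/fsubsetP => c ct; rewrite inE dis ?(fsubsetP tR).
Qed.

Lemma tiles_in_subset R1 R2 Y : R1 `<=` R2 -> Y \in tiles_in R1 -> Y \in tiles_in R2.
Proof.
move=> R12 /tiles_inP[t /tile_inbP tR ->]; apply/tiles_inP; exists t => //.
exact/tile_inbP/(fsubset_trans tR).
Qed.

Lemma tilingsD_notin R X S : X \in tiles_in R -> S \in tilings (R `\` X) -> X \notin S.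
Proof.
move=> XR /tilingsP[/fsubsetP Stiles _ _]; apply/negP => /Stiles/tiles_in_sub/fsubsetP XRX.
have /fset0Pn[c cX] := tiles_in_neq0 XR.
by have := XRX c cX; rewrite inE cX.
Qed.

Definition tilings_with (R X : {fset cell}) := [fset S in tilings R | X \in S].

Lemma mem_tilings_with R X S : (S \in tilings_with R X) = (S \in tilings R) && (X \in S).
Proof. by rewrite /tilings_with inE. Qed.

Lemma tilings_withE R X : X \in tiles_in R ->
  tilings_with R X = [fset X |` S | S in tilings (R `\` X)].
Proof.
move=> XR; apply/fsetP => S; rewrite mem_tilings_with.
apply/andP/imfsetP => [[]|[S' S'T ->]].
  case/tilingsP => /fsubsetP Stiles covS disS XS.
  have XY Y c : Y \in S -> c \in Y -> c \in X -> Y = X.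
    by move=> YS cY cX; apply: (disS c).
  exists (S `\ X); last by rewrite fsetD1K.
  apply/tilingsP; split.
  - apply/fsubsetP => Y; rewrite in_fsetD1 => /andP[YX YS].
    apply: tiles_inD; first exact: Stiles.
    by move=> c cY; apply: contra YX => cX; rewrite (XY Y c).
  - move=> c; rewrite inE => /andP[cX cR]; have [Y YS cY] := covS c cR.
    exists Y => //; rewrite in_fsetD1 YS andbT.
    by apply: contraNneq cX => YX; rewrite -YX.
  - by move=> c Y Z; rewrite !in_fsetD1 => /andP[_ ?] /andP[_ ?]; apply: disS.
have XS' := tilingsD_notin XR S'T.
case/tilingsP: S'T => /fsubsetP S'tiles covS' disS'.
have YX Y c : Y \in S' -> c \in Y -> c \notin X.
  by move=> /S'tiles/tiles_in_sub/fsubsetP YRX /YRX; rewrite inE => /andP[].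
split; last exact: fsetU11.
apply/tilingsP; split.
- apply/fsubsetP => Y; rewrite in_fset1U => /orP[/eqP -> //|/S'tiles].
  exact/tiles_in_subset/fsubsetDl.
- move=> c cR; have [cX|ncX] := boolP (c \in X); first by exists X; rewrite ?fsetU11.
  have [|Y YS cY] := covS' c; first by rewrite inE ncX.
  by exists Y; rewrite // in_fset1U YS orbT.
- move=> c Y Z; rewrite !in_fset1U => /orP[/eqP->|YS] /orP[/eqP->|ZS] // cY cZ.
  + by have := YX _ _ ZS cZ; rewrite cY.
  + by have := YX _ _ YS cY; rewrite cZ.
  + exact: (disS' c).
Qed.

Lemma card_tilings_with R X : X \in tiles_in R ->
  #|` tilings_with R X| = #|` tilings (R `\` X)|.
Proof.
move=> XR; rewrite tilings_withE // card_in_imfset // => S1 S2 S1T S2T E.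
apply/fsetP => Y; have [->|YX] := eqVneq Y X.
  by rewrite !(negbTE (tilingsD_notin XR _)).
by move/fsetP/(_ Y): E; rewrite !in_fset1U (negbTE YX).
Qed.

Lemma tilings_cover R S c : S \in tilings R -> c \in R -> exists2 X, X \in S & c \in X.
Proof. by case/tilingsP => _ + _; apply. Qed.

Lemma card_tilings_unique R c X : c \in R -> X \in tiles_in R ->
  (forall Y, Y \in tiles_in R -> c \in Y -> Y = X) ->
  #|` tilings R| = #|` tilings (R `\` X)|.
Proof.
move=> cR XR onlyX; rewrite -card_tilings_with //; congr #|` _|.
apply/fsetP => S; rewrite mem_tilings_with; have [ST|] //= := boolP (S \in tilings R).
have [Y YS cY] := tilings_cover ST cR.
case/tilingsP: ST => /fsubsetP Stiles _ _.
by rewrite -(onlyX Y (Stiles _ YS) cY) YS.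
Qed.

Lemma card_tilings_pair R c X1 X2 : c \in R -> X1 \in tiles_in R -> X2 \in tiles_in R ->
  c \in X1 -> c \in X2 -> X1 != X2 ->
  (forall Y, Y \in tiles_in R -> c \in Y -> Y = X1 \/ Y = X2) ->
  #|` tilings R| = (#|` tilings (R `\` X1)| + #|` tilings (R `\` X2)|)%N.
Proof.
move=> cR X1R X2R cX1 cX2 X12 onlyX12.
rewrite -(card_tilings_with X1R) -(card_tilings_with X2R) -cardfsUI.
have -> : tilings_with R X1 `&` tilings_with R X2 = fset0.
  apply/fsetP => S.
  rewrite in_fsetI (mem_tilings_with R X1) (mem_tilings_with R X2) in_fset0.
  apply/negP => /andP[/andP[/tilingsP[_ _ disS] X1S] /andP[_ X2S]].
  by move: X12; rewrite (disS c X1 X2) ?eqxx.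
rewrite cardfs0 addn0; congr #|` _|.
apply/fsetP => S.
rewrite in_fsetU (mem_tilings_with R X1) (mem_tilings_with R X2).
have [ST|] //= := boolP (S \in tilings R).
have [Y YS cY] := tilings_cover ST cR.
case/tilingsP: ST => /fsubsetP Stiles _ _.
by case: (onlyX12 Y (Stiles _ YS) cY) => <-; rewrite YS ?orbT.
Qed.

Lemma card_tilings0 : #|` tilings fset0| = 1%N.
Proof.
have -> : tilings fset0 = [fset fset0]; last exact: cardfs1.
apply/fsetP => S; rewrite in_fset1; apply/idP/eqP => [/tilingsP[/fsubsetP Stiles _ _]|->].
  apply/fsetP => X; rewrite in_fset0; apply/negP => /[dup] /Stiles /tiles_in_sub.
  by rewrite fsubset0 => /eqP-> /Stiles /tiles_in_neq0; rewrite eqxx.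
by apply/tilingsP; split=> [|c|c X]; rewrite ?fsub0set ?in_fset0.
Qed.

Lemma tile_set_Small c : tile_set (Small c) = [fset c].
Proof. by apply/fsetP => c'; rewrite mem_tile_set !inE. Qed.

Lemma large_tile_set_neq1 c t : t \in large_through c -> tile_set t != [fset c].
Proof.
move=> tc; apply/eqP => E.
have cell_c c' : c' \in tile_cells t -> c' = c by rewrite -mem_tile_set E inE => /eqP.
move: tc; clear E; case: t cell_c => [c'|a' b'|a' b'] cell_c.
- by case: c cell_c => [[a b] []] _; rewrite !inE.
- have := cell_c (a' + 1, b', true); have := cell_c (a', b', true).
  by rewrite !inE !eqxx ?orbT => /(_ isT) e1 /(_ isT); rewrite -e1 => -[]; lia.
- have := cell_c (a' + 1, b', false); have := cell_c (a', b' + 1, false).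
  by rewrite !inE !eqxx ?orbT => /(_ isT) e1 /(_ isT); rewrite -e1 => -[]; lia.
Qed.

Lemma small_tile_in R c : c \in R -> tile_set (Small c) \in tiles_in R.
Proof. by move=> cR; apply/tiles_inP; exists (Small c); rewrite // /tile_inb /= cR. Qed.

Lemma tiles_in_through R c Y : Y \in tiles_in R -> c \in Y ->
  exists2 t, t \in tiles_through c & tile_inb R t /\ Y = tile_set t.
Proof.
by case/tiles_inP => t tR ->; rewrite mem_tile_set tiles_throughP => tc; exists t.
Qed.

Lemma card_tilings_forced R c :
  c \in R -> {in large_through c, forall t, ~~ tile_inb R t} ->
  #|` tilings R| = #|` tilings (R `\ c)|.
Proof.
move=> cR noLarge; rewrite -tile_set_Small.
rewrite (@card_tilings_unique _ c (tile_set (Small c))) ?small_tile_in //.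
move=> Y /tiles_in_through/[apply] -[t]; rewrite inE => /orP[/eqP-> [] //|/noLarge].
by move/negbTE=> -> [].
Qed.

Lemma card_tilings_choice R c t : c \in R -> t \in large_through c -> tile_inb R t ->
  {in large_through c, forall t', tile_inb R t' -> t' = t} ->
  #|` tilings R| = (#|` tilings (R `\ c)| + #|` tilings (R `\` tile_set t)|)%N.
Proof.
move=> cR tc tR onlyt; rewrite -tile_set_Small.
apply: (card_tilings_pair cR) => //.
- exact: small_tile_in.
- by apply/tiles_inP; exists t.
- by rewrite tile_set_Small inE.
- by rewrite mem_tile_set tiles_throughP inE tc orbT.
- by rewrite tile_set_Small eq_sym large_tile_set_neq1.
move=> Y /tiles_in_through/[apply] -[t']; rewrite inE.
by case/orP=> [/eqP-> [_ ->] | t'c [/(onlyt _ t'c) -> ->]]; [left | right].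
Qed.

(* Cells of a row are numbered from left to right: up (a, 0) has number 2a and
   down (a, 0) has 2a + 1 in the bottom row; down (a, 1) has 2a + 2 and
   up (a, 1) has 2a + 1 in the top row. *)
Definition in_rows2 (p q : nat) (c : cell) : bool :=
  let: (a, b, u) := c in
  (b == 0) && (0 <= 2 * a + (if u then 0 else 1) < p%:Z) ||
  (b == 1) && (0 <= 2 * a + (if u then 1 else 2) < q%:Z).

Lemma mem_row_cells (m : nat) (b0 : int) (u0 : bool) a b u :
  ((a, b, u) \in [seq (i%:Z, b0, u0) | i <- iota 0 m]) =
  [&& b == b0, u == u0, 0 <= a & a < m%:Z].
Proof.
apply/mapP/idP => [[i]|/and4P[/eqP-> /eqP-> a0 am]].
  by rewrite mem_iota => /andP[_ im] [-> -> ->]; rewrite !eqxx /=; lia.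
by exists (absz a); [rewrite mem_iota; lia | congr (_, _, _); lia].
Qed.

Lemma mem_row_cells_shift (m : nat) (b0 : int) (u0 : bool) a b u :
  ((a, b, u) \in [seq (i%:Z - 1, b0, u0) | i <- iota 0 m]) =
  [&& b == b0, u == u0, -1 <= a & a < m%:Z - 1].
Proof.
apply/mapP/idP => [[i]|/and4P[/eqP-> /eqP-> a0 am]].
  by rewrite mem_iota => /andP[_ im] [-> -> ->]; rewrite !eqxx /=; lia.
by exists (absz (a + 1)); [rewrite mem_iota; lia | congr (_, _, _); lia].
Qed.

Lemma mem_Hreg n c : (c \in Hreg n) = in_rows2 (2 * n - 1) (2 * n - 1) c.
Proof.
case: c => [[a b] u].
rewrite /Hreg in_fset /= /Hcells !mem_cat !mem_row_cells mem_row_cells_shift.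
by case: u => /=; lia.
Qed.

(* [Hreg (p + q)] only serves as a finite superset. *)
Definition rows2 (p q : nat) : {fset cell} := [fset c in Hreg (p + q) | in_rows2 p q c].

Lemma mem_rows2 p q c : (c \in rows2 p q) = in_rows2 p q c.
Proof.
rewrite /rows2 in_fset inE /=; apply/andP/idP => [[] // | cpq]; split=> //.
change (c \in Hreg (p + q)); rewrite mem_Hreg.
by move: cpq; case: c => [[a b] []] /=; lia.
Qed.

Lemma Hreg_rows2 n : Hreg n.+1 = rows2 (2 * n + 1) (2 * n + 1).
Proof. by apply/fsetP => -[[a b] u]; rewrite mem_rows2 mem_Hreg /=; case: u; lia. Qed.

Lemma Preg_rows2 n : Preg n.+1 = rows2 (2 * n) (2 * n + 1).
Proof.
apply/fsetP => -[[a b] u]; rewrite mem_rows2 /Preg in_fsetD1 mem_Hreg /= !xpair_eqE.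
by case: u => /=; lia.
Qed.

Definition nrows2 (p q : nat) : nat := #|` tilings (rows2 p q)|.

Ltac cell_arith :=
  rewrite ?in_fsetD1 ?in_fsetD ?mem_tile_set /= ?mem_rows2 /= ?inE ?xpair_eqE /=.

Ltac rows2_ext := apply/fsetP => -[[a b] []]; cell_arith; lia.

Ltac no_large_tile :=
  move=> t; rewrite !inE => /or4P[]/eqP->; rewrite /tile_inb /=; cell_arith; lia.

Ltac only_large_tile :=
  move=> t; rewrite !inE => /or4P[]/eqP-> //; rewrite /tile_inb /=; cell_arith; lia.

Lemma nrows2_top_up p k : (p <= 2 * k + 2)%N -> nrows2 p (2 * k + 2) = nrows2 p (2 * k + 1).
Proof.
move=> pk; rewrite /nrows2 (@card_tilings_forced _ (k%:Z, 1, true)).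
- by congr #|` tilings _|; rows2_ext.
- by rewrite mem_rows2 /=; lia.
- no_large_tile.
Qed.

Lemma nrows2_bottom_down k q :
  (q <= 2 * k + 1)%N -> nrows2 (2 * k + 2) q = nrows2 (2 * k + 1) q.
Proof.
move=> qk; rewrite /nrows2 (@card_tilings_forced _ (k%:Z, 0, false)).
- by congr #|` tilings _|; rows2_ext.
- by rewrite mem_rows2 /=; lia.
- no_large_tile.
Qed.

Lemma nrows2_diag k : nrows2 (2 * k + 2) (2 * k + 2) = nrows2 (2 * k + 1) (2 * k + 1).
Proof. by rewrite nrows2_top_up // nrows2_bottom_down. Qed.

Lemma nrows2_bottom_up k q : (2 * k + 2 <= q <= 2 * k + 3)%N ->
  nrows2 (2 * k + 3) q = (nrows2 (2 * k + 2) q + nrows2 (2 * k) (2 * k + 1))%N.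
Proof.
move=> qk; rewrite /nrows2.
(* The large tile is [LargeUp k 0], written as [large_through] lists it. *)
rewrite (@card_tilings_choice _ (k%:Z + 1, 0, true) (LargeUp (k%:Z + 1 - 1) 0)).
- congr (_ + _)%N; first by congr #|` tilings _|; rows2_ext.
  have [->|->] : q = (2 * k + 2)%N \/ q = (2 * k + 3)%N by lia.
    by congr #|` tilings _|; rows2_ext.
  rewrite (@card_tilings_forced _ (k%:Z, 1, false)).
  + by congr #|` tilings _|; rows2_ext.
  + by cell_arith; lia.
  + no_large_tile.
- by rewrite mem_rows2 /=; lia.
- by rewrite !inE eqxx orbT.
- by rewrite /tile_inb /= !mem_rows2 /=; lia.
- only_large_tile.
Qed.

Lemma nrows2_top_down k :
  nrows2 (2 * k + 2) (2 * k + 3) =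
  (nrows2 (2 * k + 2) (2 * k + 2) + nrows2 (2 * k + 1) (2 * k))%N.
Proof.
rewrite /nrows2.
rewrite (@card_tilings_choice _ (k%:Z, 1, false) (LargeDown (k%:Z - 1) (1 - 1))).
- by congr (_ + _)%N; congr #|` tilings _|; rows2_ext.
- by rewrite mem_rows2 /=; lia.
- by rewrite !inE eqxx !orbT.
- by rewrite /tile_inb /= !mem_rows2 /=; lia.
- only_large_tile.
Qed.

Lemma nrows2_00 : nrows2 0 0 = 1%N.
Proof.
rewrite /nrows2 -[RHS]card_tilings0; congr #|` tilings _|.
by apply/fsetP => -[[a b] []]; rewrite mem_rows2 inE /=; lia.
Qed.

Lemma nrows2_01 : nrows2 0 1 = 1%N.
Proof.
rewrite /nrows2 (@card_tilings_forced _ (-1, 1, false)).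
- by rewrite -[RHS]nrows2_00; congr #|` tilings _|; rows2_ext.
- by rewrite mem_rows2.
- no_large_tile.
Qed.

Lemma nrows2_1 q : (q <= 1)%N -> nrows2 1 q = nrows2 0 q.
Proof.
move=> q1; rewrite /nrows2 (@card_tilings_forced _ (0, 0, true)).
- by congr #|` tilings _|; rows2_ext.
- by rewrite mem_rows2.
- no_large_tile.
Qed.

(* The left side counts the mirror image of the right side. *)
Lemma nrows2_mirror k : nrows2 (2 * k + 1) (2 * k) = nrows2 (2 * k) (2 * k + 1).
Proof.
elim: k => [|k IHk]; first by rewrite muln0 nrows2_1 // nrows2_01 nrows2_00.
have -> : (2 * k.+1 = 2 * k + 2)%N by lia.
have -> : (2 * k + 2 + 1 = 2 * k + 3)%N by lia.
by rewrite nrows2_top_down nrows2_bottom_up ?nrows2_diag ?IHk //; lia.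
Qed.

Lemma Hn_rows2 n : Hn n.+1 = nrows2 (2 * n + 1) (2 * n + 1).
Proof. by rewrite /Hn ntilingsE Hreg_rows2. Qed.

Lemma Pn_rows2 n : Pn n.+1 = nrows2 (2 * n) (2 * n + 1).
Proof. by rewrite /Pn ntilingsE Preg_rows2. Qed.

Lemma Hn1 : Hn 1 = 1%N.
Proof. by rewrite Hn_rows2 nrows2_1 // nrows2_01. Qed.

Lemma Pn1 : Pn 1 = 1%N.
Proof. by rewrite Pn_rows2 nrows2_01. Qed.

Lemma Pn_rec k : Pn k.+2 = (Hn k.+1 + Pn k.+1)%N.
Proof.
rewrite !Pn_rows2 Hn_rows2.
have -> : (2 * k.+1 = 2 * k + 2)%N by lia.
have -> : (2 * k + 2 + 1 = 2 * k + 3)%N by lia.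
by rewrite nrows2_top_down nrows2_diag nrows2_mirror.
Qed.

Lemma Hn_rec k : Hn k.+2 = (Hn k.+1 + 2 * Pn k.+1)%N.
Proof.
have HP : Hn k.+2 = (Pn k.+2 + Pn k.+1)%N.
  rewrite Hn_rows2 !Pn_rows2.
  have -> : (2 * k.+1 + 1 = 2 * k + 3)%N by lia.
  have -> : (2 * k.+1 = 2 * k + 2)%N by lia.
  by rewrite nrows2_bottom_up //; lia.
by rewrite HP Pn_rec; lia.
Qed.

Lemma pell_closed_form (R : rcfType) (H P : nat -> nat) :
  H 1%N = 1%N -> P 1%N = 1%N ->
  (forall k, H k.+2 = (H k.+1 + 2 * P k.+1)%N /\ P k.+2 = (H k.+1 + P k.+1)%N) ->
  forall n, (1 <= n)%N ->
     (P n)%:R = ((1 + Num.sqrt 2) ^+ n - (1 - Num.sqrt 2) ^+ n) / (2 * Num.sqrt 2) :> R /\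
     (H n)%:R = ((1 + Num.sqrt 2) ^+ n + (1 - Num.sqrt 2) ^+ n) / 2 :> R.
Proof.
move=> H1 P1 rec [//|n] _.
have s2 : Num.sqrt (2 : R) ^+ 2 = 2 by rewrite sqr_sqrtr // ler0n.
have s0 : Num.sqrt (2 : R) != 0 by rewrite sqrtr_eq0 -ltNge ltr0n.
have two0 : (2 : R) != 0 by rewrite pnatr_eq0.
move: s2 s0; set s := Num.sqrt (2 : R); clearbody s => s2 s0.
have rationalize z : z / (2 * s) = z * s / (2 * s ^+ 2) by field; rewrite s0.
rewrite s2 in rationalize.
elim: n => [|k [IHP IHH]].
  by rewrite P1 H1 !expr1; split; field; rewrite ?s0 ?two0.
have [-> ->] := rec k; rewrite !natrD addr0 IHP IHH.
move: ((1 + s) ^+ k.+1) ((1 - s) ^+ k.+1) (exprS (1 + s) k.+1) (exprS (1 - s) k.+1).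
move=> x y -> ->; split; last rewrite !rationalize; by field; rewrite ?s0.
Qed.

Theorem theorem1 :
  (Hn 1 = 1%N /\ Hn 2 = 3%N /\ Pn 1 = 1%N /\ Pn 2 = 2%N) /\
  (forall n : nat, (2 <= n)%N ->
     Hn n = (Hn n.-1 + 2 * Pn n.-1)%N /\ Pn n = (Hn n.-1 + Pn n.-1)%N) /\
  (forall n : nat, (3 <= n)%N ->
     Hn n = (2 * Hn n.-1 + Hn n.-2)%N /\ Pn n = (2 * Pn n.-1 + Pn n.-2)%N) /\
  (forall (R : rcfType) (n : nat), (1 <= n)%N ->
     (Pn n)%:R = ((1 + Num.sqrt 2) ^+ n - (1 - Num.sqrt 2) ^+ n)
                   / (2 * Num.sqrt 2) :> R /\
     (Hn n)%:R = ((1 + Num.sqrt 2) ^+ n + (1 - Num.sqrt 2) ^+ n) / 2 :> R).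
Proof.
have rec k : Hn k.+2 = (Hn k.+1 + 2 * Pn k.+1)%N /\ Pn k.+2 = (Hn k.+1 + Pn k.+1)%N.
  by split; [exact: Hn_rec | exact: Pn_rec].
split; first by rewrite Hn_rec Pn_rec Hn1 Pn1.
split; first by case=> [|[|k]] // _; exact: rec.
split; last by move=> R; exact: pell_closed_form Hn1 Pn1 rec.
by case=> [|[|[|k]]] // _ /=; have := rec k.+1; have := rec k; lia.
Qed.
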